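(* Let $D$ be a division algebra and let $\sigma\in\mathrm{Aut}(D)$ be of infinite inner order. Then the tuple $(\sigma,\sigma^{-1})$ is not automorphically normalizable over $D$.
   Context: All rings are associative with unity. An automorphism $\sigma$ of $D$ has finite inner order if $\sigma^k$ is an inner automorphism $r\mapsto crc^{-1}$ ($c\in D^\times$) for some positive integer $k$; otherwise it has infinite inner order. For commuting automorphisms $\sigma_1,\ldots,\sigma_n$ of $D$, $D[t_1,\ldots,t_n;\sigma_1,\ldots,\sigma_n]$ is the skew polynomial ring in pairwise commuting variables with $t_ia=\sigma_i(a)t_i$ for $a\in D$. For a ring $S\supseteq D$, $a\in S$ is automorphic over $D$ with respect to $\tau$ if $ab=\tau(b)a$ for all $b\in D$. Commuting $a_1,\ldots,a_m\in S$ are (left) algebraically independent over $D$ if monomials in them are left linearly independent over $D$. $S$ is automorphically normalizable over $D$ if there exist $m\ge0$ and commuting $a_1,\ldots,a_m\in S$, automorphic over $D$ with respect to pairwise commuting automorphisms, left algebraically independent over $D$, such that $S$ is finitely generated as a left module over the subring $D[a_1,\ldots,a_m]$ generated by $D\cup\{a_1,\ldots,a_m\}$. A tuple $(\sigma_1,\ldots,\sigma_n)$ is automorphically normalizable over $D$ if every quotient of $D[t_1,\ldots,t_n;\sigma_1,\ldots,\sigma_n]$ by a proper two-sided ideal is automorphically normalizable over $D$. *)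

From HB Require Import structures.
From mathcomp Require Import all_boot all_order all_algebra.
Set Implicit Arguments. Unset Strict Implicit. Unset Printing Implicit Defensive.
Import GRing.Theory.
Local Open Scope ring_scope.

Definition ring_hom (A B : pzRingType) (f : A -> B) : Prop :=
  [/\ {morph f : x y / x + y}, {morph f : x y / x * y} & f 1 = 1].

Definition ring_aut (A : pzRingType) (f : A -> A) : Prop :=
  ring_hom f /\ bijective f.

Definition division_ring (D : unitRingType) : Prop :=
  forall x : D, x != 0 -> x \is a GRing.unit.

Definition finite_inner_order (D : unitRingType) (sigma : D -> D) : Prop :=
  exists k : nat, (0 < k)%N /\
    exists c : D, c \is a GRing.unit /\ forall r, iter k sigma r = c * r * c^-1.

Definition monom (S : pzRingType) (m n : nat) (a : 'I_m -> S)
  (e : {ffun 'I_m -> 'I_n}) : S := \prod_(i < m) a i ^+ e i.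

Definition left_alg_indep (D S : pzRingType) (j : D -> S) (m : nat)
  (a : 'I_m -> S) : Prop :=
  forall (n : nat) (c : {ffun 'I_m -> 'I_n} -> D),
    \sum_(e : {ffun 'I_m -> 'I_n}) j (c e) * monom a e = 0 -> forall e, c e = 0.

Definition left_monom_span (D S : pzRingType) (j : D -> S) (m : nat)
  (a : 'I_m -> S) : Prop :=
  forall s : S, exists (n : nat) (c : {ffun 'I_m -> 'I_n} -> D),
    s = \sum_(e : {ffun 'I_m -> 'I_n}) j (c e) * monom a e.

Definition gen_subring (S : pzRingType) (G : S -> Prop) (x : S) : Prop :=
  forall P : S -> Prop, (forall g, G g -> P g) -> P 1 ->
    (forall u v, P u -> P v -> P (u - v)) ->
    (forall u v, P u -> P v -> P (u * v)) -> P x.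

Definition left_fin_gen (S : pzRingType) (B : S -> Prop) : Prop :=
  exists (k : nat) (g : 'I_k -> S), forall s : S,
    exists b : 'I_k -> S, (forall l, B (b l)) /\ s = \sum_(l < k) b l * g l.

Definition aut_normalizable (D S : pzRingType) (j : D -> S) : Prop :=
  exists (m : nat) (a : 'I_m -> S) (tau : 'I_m -> D -> D),
    (forall i i', a i * a i' = a i' * a i) /\
    (forall i, ring_aut (tau i)) /\
    (forall i i' x, tau i (tau i' x) = tau i' (tau i x)) /\
    (forall i b, a i * j b = j (tau i b) * a i) /\
    left_alg_indep j a /\
    left_fin_gen (gen_subring (fun x => (exists d, x = j d) \/ exists i, x = a i)).

(* R (with embedding iota : D -> R and variables t) is the skew polynomial ring
   D[t_1,...,t_n; sigma_1,...,sigma_n]: the t_i commute, t_i a = sigma_i(a) t_i,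
   and the monomials in the t_i form a basis of R as a left D-module. *)
Definition is_skew_poly_ring (D : pzRingType) (n : nat) (sigma : 'I_n -> D -> D)
  (R : pzRingType) (iota : D -> R) (t : 'I_n -> R) : Prop :=
  [/\ ring_hom iota,
      forall i i', t i * t i' = t i' * t i,
      forall i a, t i * iota a = iota (sigma i a) * t i,
      left_alg_indep iota t &
      left_monom_span iota t].

(* (sigma_1,...,sigma_n) is automorphically normalizable over D: every quotient
   of D[t;sigma] by a proper two-sided ideal, i.e. every nonzero ring S with a
   surjective ring homomorphism phi from D[t;sigma], is automorphically
   normalizable over (the image of) D. *)
Definition aut_normalizable_tuple (D : pzRingType) (n : nat)
  (sigma : 'I_n -> D -> D) : Prop :=
  forall (R : pzRingType) (iota : D -> R) (t : 'I_n -> R),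
    is_skew_poly_ring sigma iota t ->
    forall (S : pzRingType) (phi : R -> S),
      ring_hom phi -> (forall s : S, exists r : R, phi r = s) -> (1 : S) != 0 ->
      aut_normalizable (fun d => phi (iota d)).

Definition pair_fun (T : Type) (f g : T) : 'I_2 -> T :=
  fun i => if val i == 0%N then f else g.

(* Dividing D[t1, t2; sigma, sigma^-1] by t1 t2 - 1 gives the skew Laurent ring
   S = D[t, t^-1; sigma].  If a in S is automorphic over D with respect to tau,
   every nonzero coefficient c_k of a satisfies c_k sigma^k(b) = tau(b) c_k, so two
   distinct degrees would make a power of sigma inner: a = c t^k is a monomial.
   Any two integers k, l satisfy p k + q l = p' k + q' l for distinct pairs of
   naturals, making the corresponding monomials left proportional; hence an
   independent family has at most one member and D[a] contains only powers of t
   of one sign.  These never move the support of a function across a half-line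
   in the other direction, and a finite D[a]-combination of elements of S moves
   it by a bounded amount, whereas t^(-n) moves it by n. *)

From HB Require Import structures.
From mathcomp Require Import all_boot all_order all_algebra.
From mathcomp Require Import boolp zify.
Set Implicit Arguments. Unset Strict Implicit. Unset Printing Implicit Defensive.
Import GRing.Theory Order.TTheory Num.Theory.
Local Open Scope ring_scope.

Section RingHom.
Variables (A B : pzRingType) (f : A -> B).
Hypothesis hf : ring_hom f.

Lemma ring_homD x y : f (x + y) = f x + f y. Proof. by case: hf. Qed.
Lemma ring_homM x y : f (x * y) = f x * f y. Proof. by case: hf. Qed.
Lemma ring_hom1 : f 1 = 1. Proof. by case: hf. Qed.

Lemma ring_hom0 : f 0 = 0.
Proof. by apply: (addrI (f 0)); rewrite -ring_homD !addr0. Qed.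

Lemma ring_homN x : f (- x) = - f x.
Proof. by apply: (addrI (f x)); rewrite -ring_homD !subrr ring_hom0. Qed.

Lemma ring_hom_sum (I : Type) (r : seq I) (F : I -> A) :
  f (\sum_(i <- r) F i) = \sum_(i <- r) f (F i).
Proof. exact: (big_morph f ring_homD ring_hom0). Qed.

End RingHom.

Lemma ring_hom_iter (A : pzRingType) (f : A -> A) n : ring_hom f -> ring_hom (iter n f).
Proof.
move=> hf; elim: n => [|n [hD hM h1]] //; split=> [x y|x y|] /=.
- by rewrite hD ring_homD.
- by rewrite hM ring_homM.
- by rewrite h1 ring_hom1.
Qed.

Lemma ring_hom_can (A : pzRingType) (f g : A -> A) :
  ring_hom f -> cancel f g -> cancel g f -> ring_hom g.
Proof.
move=> hf fK gK; split=> [x y|x y|]; apply: (can_inj fK).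
- by rewrite (ring_homD hf) !gK.
- by rewrite (ring_homM hf) !gK.
- by rewrite (ring_hom1 hf) gK.
Qed.

Lemma division_ring_mulf_neq0 (D : unitRingType) (c d : D) :
  division_ring D -> c != 0 -> d != 0 -> c * d != 0.
Proof.
move=> divD c0 d0; apply: contraNneq d0 => cd0.
by rewrite -(mulKr (divD _ c0) d) cd0 mulr0.
Qed.

Lemma prodr_mem_eq0 (R : pzRingType) (I : eqType) (r : seq I) (F : I -> R) i :
  i \in r -> F i = 0 -> \prod_(j <- r) F j = 0.
Proof.
elim: r => [//|x r IH]; rewrite inE big_cons => /orP[/eqP <- ->|ir Fi0].
  exact: mul0r.
by rewrite IH ?mulr0.
Qed.

Lemma ffun2_eq (T : eqType) (e e' : {ffun 'I_2 -> T}) :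
  (e == e') = (e ord0 == e' ord0) && (e ord_max == e' ord_max).
Proof.
apply/eqP/andP => [-> //|[/eqP e0 /eqP e1]].
apply/ffunP => -[[|[|//]] i2].
- by rewrite (_ : Ordinal i2 = ord0) //; apply: val_inj.
- by rewrite (_ : Ordinal i2 = ord_max) //; apply: val_inj.
Qed.

Section IntegerIterates.
Variables (D : pzRingType) (s si : D -> D).
Hypotheses (hs : ring_hom s) (sK : cancel s si) (siK : cancel si s).

Definition iterz (z : int) : D -> D :=
  match z with Posz n => iter n s | Negz n => iter n.+1 si end.

Lemma iterz_hom z : ring_hom (iterz z).
Proof. by case: z => n; apply: ring_hom_iter; last exact: ring_hom_can hs sK siK. Qed.

Lemma iterzS z x : iterz (z + 1) x = s (iterz z x).
Proof.
case: z => [n|[|n]].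
- by rewrite (_ : n%:Z + 1 = n.+1%:Z) //; lia.
- by rewrite /= siK.
- by rewrite (_ : Negz n.+1 + 1 = Negz n) /= ?siK // !NegzE; lia.
Qed.

Lemma iterzSN z x : iterz (z - 1) x = si (iterz z x).
Proof. by rewrite -[in RHS](subrK 1 z) iterzS sK. Qed.

Lemma iterzD z w x : iterz (z + w) x = iterz z (iterz w x).
Proof.
elim/int_rect: z => [|n IH|n IH]; first by rewrite add0r.
- have -> : n.+1%:Z + w = n%:Z + w + 1 by lia.
  by rewrite iterzS IH.
- have -> : - n.+1%:Z + w = - n%:Z + w - 1 by lia.
  have -> : - n.+1%:Z = - n%:Z - 1 by lia.
  by rewrite !iterzSN IH.
Qed.

Lemma iterz_neq0 k c : c != 0 -> iterz k c != 0.
Proof.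
move=> c0; apply: contraNneq c0 => kc0.
by rewrite -[c]/(iterz 0 c) -(addNr k) iterzD kc0 (ring_hom0 (iterz_hom _)).
Qed.

End IntegerIterates.

(** * Twisted shift operators *)

(* The operators [f |-> (x |-> \sum_i sa_weight x c_i * f (sa_act x k_i))] on
   [sa_point A -> D] compose like the elements [\sum_i c_i t^k_i] of the skew
   monoid ring with [t^k c = sa_twist k c t^k]: this realises skew polynomial
   and skew Laurent rings without constructing them as quotients. *)
Record skew_action (D : pzRingType) := SkewAction {
  sa_point : Type;
  sa_shift : Type;
  sa_act : sa_point -> sa_shift -> sa_point;
  sa_add : sa_shift -> sa_shift -> sa_shift;
  sa_zero : sa_shift;
  sa_weight : sa_point -> D -> D;
  sa_twist : sa_shift -> D -> D;
  sa_act0 : forall x, sa_act x sa_zero = x;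
  sa_actD : forall x k l, sa_act (sa_act x k) l = sa_act x (sa_add k l);
  sa_weight_hom : forall x, ring_hom (sa_weight x);
  sa_weight_act : forall x k c, sa_weight (sa_act x k) c = sa_weight x (sa_twist k c) }.

Section SkewOperators.
Variables (D : pzRingType) (A : skew_action D).
Local Notation X := (sa_point A).
Local Notation K := (sa_shift A).

Definition is_skew_op (u : (X -> D) -> X -> D) : Prop :=
  exists L : seq (D * K),
    forall f x, u f x = \sum_(y <- L) sa_weight x y.1 * f (sa_act x y.2).

Lemma is_skew_op0 : is_skew_op (fun _ _ => 0).
Proof. by exists [::] => f x; rewrite big_nil. Qed.

Lemma is_skew_op1 : is_skew_op id.
Proof.
exists [:: (1, sa_zero A)] => f x.
by rewrite big_seq1 /= (ring_hom1 (sa_weight_hom x)) mul1r sa_act0.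
Qed.

Lemma is_skew_opD u v :
  is_skew_op u -> is_skew_op v -> is_skew_op (fun f x => u f x + v f x).
Proof. by move=> [L uL] [M vM]; exists (L ++ M) => f x; rewrite big_cat uL vM. Qed.

Lemma is_skew_opN u : is_skew_op u -> is_skew_op (fun f x => - u f x).
Proof.
move=> [L uL]; exists [seq (- y.1, y.2) | y <- L] => f x.
rewrite big_map uL -sumrN; apply: eq_bigr => y _ /=.
by rewrite (ring_homN (sa_weight_hom x)) mulNr.
Qed.

Lemma is_skew_opM u v : is_skew_op u -> is_skew_op v -> is_skew_op (fun f => u (v f)).
Proof.
move=> [L uL] [M vM].
exists [seq (y.1 * sa_twist y.2 z.1, sa_add y.2 z.2) | y <- L, z <- M] => f x.
rewrite big_allpairs_dep uL; apply: eq_bigr => y _; rewrite vM mulr_sumr.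
apply: eq_bigr => z _ /=.
by rewrite (ring_homM (sa_weight_hom x)) sa_weight_act sa_actD mulrA.
Qed.

Lemma is_skew_op_addf u f g x : is_skew_op u ->
  u (fun y => f y + g y) x = u f x + u g x.
Proof.
by move=> [L uL]; rewrite !uL -big_split; apply: eq_bigr => y _; rewrite mulrDr.
Qed.

Definition skew_op := {u | is_skew_op u}.

End SkewOperators.

HB.instance Definition _ (D : pzRingType) (A : skew_action D) :=
  gen_eqMixin (skew_op A).
HB.instance Definition _ (D : pzRingType) (A : skew_action D) :=
  gen_choiceMixin (skew_op A).

Section SkewOperatorRing.
Variables (D : pzRingType) (A : skew_action D).
Local Notation op := (skew_op A).

Lemma skew_op_eq (u v : op) : (forall f x, sval u f x = sval v f x) -> u = v.
Proof.
case: u v => [u hu] [v hv] /= uv.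
have eq_uv : u = v by apply: funext => f; apply: funext => x; exact: uv.
by subst v; congr exist; exact: Prop_irrelevance.
Qed.

Definition skew_zero : op := exist _ _ (is_skew_op0 A).
Definition skew_one : op := exist _ _ (is_skew_op1 A).
Definition skew_add (u v : op) : op := exist _ _ (is_skew_opD (svalP u) (svalP v)).
Definition skew_opp (u : op) : op := exist _ _ (is_skew_opN (svalP u)).
Definition skew_mul (u v : op) : op := exist _ _ (is_skew_opM (svalP u) (svalP v)).

Lemma skew_addA : associative skew_add.
Proof. by move=> u v w; apply: skew_op_eq => f x /=; rewrite addrA. Qed.
Lemma skew_addC : commutative skew_add.
Proof. by move=> u v; apply: skew_op_eq => f x /=; rewrite addrC. Qed.
Lemma skew_add0 : left_id skew_zero skew_add.
Proof. by move=> u; apply: skew_op_eq => f x /=; rewrite add0r. Qed.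
Lemma skew_addN : left_inverse skew_zero skew_opp skew_add.
Proof. by move=> u; apply: skew_op_eq => f x /=; rewrite addNr. Qed.
Lemma skew_mulA : associative skew_mul.
Proof. by move=> u v w; apply: skew_op_eq. Qed.
Lemma skew_mul1 : left_id skew_one skew_mul.
Proof. by move=> u; apply: skew_op_eq. Qed.
Lemma skew_mulr1 : right_id skew_one skew_mul.
Proof. by move=> u; apply: skew_op_eq. Qed.
Lemma skew_mulDl : left_distributive skew_mul skew_add.
Proof. by move=> u v w; apply: skew_op_eq. Qed.
Lemma skew_mulDr : right_distributive skew_mul skew_add.
Proof. by move=> u v w; apply: skew_op_eq => f x /=; exact: is_skew_op_addf (svalP u). Qed.

End SkewOperatorRing.

HB.instance Definition _ (D : pzRingType) (A : skew_action D) :=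
  GRing.isPzRing.Build (skew_op A) (@skew_addA D A) (@skew_addC D A)
    (@skew_add0 D A) (@skew_addN D A) (@skew_mulA D A) (@skew_mul1 D A)
    (@skew_mulr1 D A) (@skew_mulDl D A) (@skew_mulDr D A).

Section SkewOperatorTheory.
Variables (D : pzRingType) (A : skew_action D).
Implicit Types (u v : skew_op A) (c d : D) (k l : sa_shift A).

Lemma skew_op0 f x : sval (0 : skew_op A) f x = 0. Proof. by []. Qed.
Lemma skew_op1 f x : sval (1 : skew_op A) f x = f x. Proof. by []. Qed.
Lemma skew_opD u v f x : sval (u + v) f x = sval u f x + sval v f x. Proof. by []. Qed.
Lemma skew_opB u v f x : sval (u - v) f x = sval u f x - sval v f x. Proof. by []. Qed.
Lemma skew_opM u v f x : sval (u * v) f x = sval u (sval v f) x. Proof. by []. Qed.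

Lemma skew_op_sum (I : Type) (r : seq I) (F : I -> skew_op A) f x :
  sval (\sum_(i <- r) F i) f x = \sum_(i <- r) sval (F i) f x.
Proof. by elim: r => [|i r IH]; rewrite ?big_nil // !big_cons skew_opD IH. Qed.

Lemma skew_op_mulr_fun u f c x : sval u (fun y => f y * c) x = sval u f x * c.
Proof.
by case: u => u [L uL] /=; rewrite !uL mulr_suml; apply: eq_bigr => y _; rewrite mulrA.
Qed.

Lemma is_skew_op_mono c k :
  is_skew_op (fun f x => sa_weight x c * f (sa_act x k) : D).
Proof. by exists [:: (c, k)] => f x; rewrite big_seq1. Qed.

Definition skew_mono c k : skew_op A := exist _ _ (is_skew_op_mono c k).

Lemma skew_monoE c k f x : sval (skew_mono c k) f x = sa_weight x c * f (sa_act x k).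
Proof. by []. Qed.

Lemma skew_monoD c d k : skew_mono (c + d) k = skew_mono c k + skew_mono d k.
Proof.
by apply: skew_op_eq => f x; rewrite skew_opD !skew_monoE (ring_homD (sa_weight_hom x)) ?mulrDl.
Qed.

Lemma skew_mono0 k : skew_mono 0 k = 0.
Proof.
by apply: skew_op_eq => f x; rewrite skew_monoE (ring_hom0 (sa_weight_hom x)) ?mul0r.
Qed.

Lemma skew_mono_sum (I : Type) (r : seq I) (P : pred I) (F : I -> D) k :
  skew_mono (\sum_(i <- r | P i) F i) k = \sum_(i <- r | P i) skew_mono (F i) k.
Proof. by apply: (big_morph (skew_mono^~ k)) => [c d|]; rewrite ?skew_monoD ?skew_mono0. Qed.

Lemma skew_monoM c d k l :
  skew_mono c k * skew_mono d l = skew_mono (c * sa_twist k d) (sa_add k l).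
Proof.
apply: skew_op_eq => f x.
by rewrite skew_opM !skew_monoE sa_weight_act sa_actD (ring_homM (sa_weight_hom x)) ?mulrA.
Qed.

Lemma skew_op_mono_sum u :
  exists L : seq (D * sa_shift A), u = \sum_(y <- L) skew_mono y.1 y.2.
Proof.
case: u => u [L uL]; exists L; apply: skew_op_eq => f x /=.
by rewrite skew_op_sum uL.
Qed.

End SkewOperatorTheory.

(** * The skew polynomial ring D[t1, t2; sigma, sigma^-1] and its Laurent quotient *)

Section SkewLaurentAndPolynomialRings.
Variables (D : pzRingType) (s si : D -> D).
Hypotheses (hs : ring_hom s) (sK : cancel s si) (siK : cancel si s).
Local Notation iterz := (iterz s si).

Definition laurent_action : skew_action D :=
  @SkewAction D int int +%R +%R 0 iterz iterz
    (@addr0 int) (fun x k l => esym (addrA x k l)) (iterz_hom hs sK siK) (iterzD sK siK).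

Definition poly2_act (x : int * int) (k : nat * nat) : int * int :=
  (x.1 + k.1%:Z, x.2 + k.2%:Z).
Definition poly2_add (k l : nat * nat) : nat * nat := (k.1 + l.1, k.2 + l.2)%N.
Definition poly2_weight (x : int * int) : D -> D := iterz (x.1 - x.2).
Definition poly2_twist (k : nat * nat) : D -> D := iterz (k.1%:Z - k.2%:Z).

Lemma poly2_act0 x : poly2_act x (0, 0)%N = x.
Proof. by case: x => p q; rewrite /poly2_act /= !addr0. Qed.

Lemma poly2_actD x k l : poly2_act (poly2_act x k) l = poly2_act x (poly2_add k l).
Proof. by case: x => p q; rewrite /poly2_act /poly2_add /= !PoszD !addrA. Qed.

Lemma poly2_weight_hom x : ring_hom (poly2_weight x).
Proof. exact: iterz_hom. Qed.

Lemma poly2_weight_act x k c :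
  poly2_weight (poly2_act x k) c = poly2_weight x (poly2_twist k c).
Proof.
rewrite /poly2_weight /poly2_twist -(iterzD sK siK).
by congr (iterz _ _); case: x => p q /=; lia.
Qed.

Definition poly2_action : skew_action D :=
  @SkewAction D (int * int) (nat * nat) poly2_act poly2_add (0, 0)%N
    poly2_weight poly2_twist poly2_act0 poly2_actD poly2_weight_hom poly2_weight_act.

Definition skew_laurent := skew_op laurent_action.
Definition skew_poly2 := skew_op poly2_action.

Local Notation pmono := (@skew_mono _ poly2_action).
Local Notation lmono := (@skew_mono _ laurent_action).

Lemma laurent_monoE c k g n : sval (lmono c k) g n = iterz n c * g (n + k).
Proof. by []. Qed.

Lemma laurent_monoM c d k l : lmono c k * lmono d l = lmono (c * iterz k d) (k + l).
Proof. exact: skew_monoM. Qed.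

Definition laurent_const (d : D) : skew_laurent := lmono d 0.

Lemma laurent_const_hom : ring_hom laurent_const.
Proof.
split=> [c d|c d|]; first exact: skew_monoD.
- by rewrite /laurent_const laurent_monoM addr0.
- apply: skew_op_eq => g n; rewrite laurent_monoE skew_op1 addr0.
  by rewrite (ring_hom1 (iterz_hom hs sK siK _)) mul1r.
Qed.

Definition poly2_const (d : D) : skew_poly2 := pmono d (0, 0)%N.
Definition poly2_var (i : 'I_2) : skew_poly2 :=
  pmono 1 (if val i == 0%N then (1, 0) else (0, 1))%N.

(* The substitution t_1 |-> t, t_2 |-> t^-1, realised by letting a polynomial
   operator act on functions of the difference p - q only. *)
Definition laurent_of_poly2_fun (u : skew_poly2) : (int -> D) -> int -> D :=
  fun g n => sval u (fun x => g (x.1 - x.2)) (n, 0).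

Lemma is_skew_op_laurent_of_poly2 u :
  is_skew_op (A := laurent_action) (laurent_of_poly2_fun u).
Proof.
case: u => u [L uL]; exists [seq (y.1, y.2.1%:Z - y.2.2%:Z) | y <- L] => g n.
rewrite /laurent_of_poly2_fun /= uL big_map; apply: eq_bigr => y _ /=.
by rewrite /poly2_weight /= subr0; congr (_ * g _); lia.
Qed.

Definition laurent_of_poly2 u : skew_laurent :=
  exist _ _ (is_skew_op_laurent_of_poly2 u).

Lemma laurent_of_poly2E u g n :
  sval (laurent_of_poly2 u) g n = sval u (fun x => g (x.1 - x.2)) (n, 0).
Proof. by []. Qed.

Lemma skew_poly2_diag (u : skew_poly2) g p q :
  sval u (fun x => g (x.1 - x.2)) (p, q) = sval u (fun x => g (x.1 - x.2)) (p - q, 0).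
Proof.
case: u => u [L uL] /=; rewrite !uL; apply: eq_bigr => y _.
by rewrite /= /poly2_weight /poly2_act /= subr0; congr (_ * g _); lia.
Qed.

Lemma laurent_of_poly2_hom : ring_hom laurent_of_poly2.
Proof.
split=> [u v|u v|]; apply: skew_op_eq => g n //.
- rewrite skew_opM !laurent_of_poly2E skew_opM; congr (sval u _ _).
  by apply: funext => -[p q]; rewrite /= skew_poly2_diag.
- by rewrite laurent_of_poly2E !skew_op1 subr0.
Qed.

Lemma laurent_of_poly2_mono c (k : nat * nat) :
  laurent_of_poly2 (pmono c k) = lmono c (k.1%:Z - k.2%:Z).
Proof.
apply: skew_op_eq => g n; rewrite laurent_of_poly2E !skew_monoE /=.
by rewrite /poly2_weight subr0; congr (_ * g _); lia.
Qed.

Lemma laurent_of_poly2_const d : laurent_of_poly2 (poly2_const d) = laurent_const d.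
Proof. by rewrite laurent_of_poly2_mono subrr. Qed.

Lemma laurent_of_poly2_surj v : exists u, laurent_of_poly2 u = v.
Proof.
have [L ->] := skew_op_mono_sum v.
pose nat_pair (k : int) := if k is Negz n then (0, n.+1)%N else (`|k|, 0)%N.
exists (\sum_(y <- L) pmono y.1 (nat_pair y.2)).
rewrite (ring_hom_sum laurent_of_poly2_hom); apply: eq_bigr => -[c k] _.
by rewrite laurent_of_poly2_mono; congr skew_mono; case: k => n /=; lia.
Qed.

Lemma poly2_twist1 k : poly2_twist k 1 = 1.
Proof. exact: ring_hom1 (iterz_hom hs sK siK _). Qed.

Lemma poly2_const1 : poly2_const 1 = 1.
Proof.
apply: skew_op_eq => f x; rewrite skew_monoE skew_op1 /=.
by rewrite poly2_act0 (ring_hom1 (poly2_weight_hom x)) mul1r.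
Qed.

Lemma poly2_const_hom : ring_hom poly2_const.
Proof.
split=> [c d|c d|]; last exact: poly2_const1.
- exact: skew_monoD.
- by rewrite /poly2_const skew_monoM.
Qed.

Lemma poly2_var_comm i j : poly2_var i * poly2_var j = poly2_var j * poly2_var i.
Proof. by rewrite !skew_monoM /= !poly2_twist1 /poly2_add addnC [(_.2 + _)%N]addnC. Qed.

Lemma poly2_var_const i c :
  poly2_var i * poly2_const c = poly2_const (pair_fun s si i c) * poly2_var i.
Proof.
rewrite !skew_monoM /= /poly2_add /= !addn0 !add0n mul1r mulr1.
by rewrite /pair_fun /poly2_twist; case: (val i == 0%N).
Qed.

Lemma poly2_mono_exp k n : pmono 1 k ^+ n = pmono 1 (n * k.1, n * k.2)%N.
Proof.
elim: n => [|n IH]; first by rewrite expr0 -poly2_const1.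
by rewrite exprS IH skew_monoM /= poly2_twist1 mul1r /poly2_add !mulSn.
Qed.

Lemma poly2_monom n (e : {ffun 'I_2 -> 'I_n}) c :
  poly2_const c * monom poly2_var e = pmono c (e ord0 : nat, e ord_max : nat).
Proof.
rewrite /monom big_ord_recl big_ord_recl big_ord0 mulr1 !poly2_mono_exp !skew_monoM /=.
rewrite !poly2_twist1 mulr1 /poly2_add /= !muln1 !muln0 !add0n.
have -> : lift ord0 ord0 = ord_max :> 'I_2 by apply: val_inj.
by rewrite addn0 poly2_twist1 mulr1.
Qed.

Lemma poly2_indep : left_alg_indep poly2_const poly2_var.
Proof.
move=> n C; under eq_bigr do rewrite poly2_monom; move=> sum0 e.
pose delta (x : int * int) : D :=
  if x == ((e ord0 : nat)%:Z, (e ord_max : nat)%:Z) then 1 else 0.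
have := congr1 (fun u : skew_poly2 => sval u delta (0, 0)) sum0.
rewrite skew_op0 skew_op_sum (bigD1 e) //= big1 => [|e' e'e].
  by rewrite addr0 /delta /poly2_act /= !add0r eqxx mulr1.
rewrite /delta /poly2_act /= !add0r.
by rewrite xpair_eqE !eqz_nat !val_eqE -ffun2_eq (negbTE e'e) mulr0.
Qed.

Lemma poly2_span : left_monom_span poly2_const poly2_var.
Proof.
move=> v; have [L ->] := skew_op_mono_sum v.
pose N := (\max_(y <- L) (y.2.1 + y.2.2))%N.
pose exps (e : {ffun 'I_2 -> 'I_N.+1}) := (e ord0 : nat, e ord_max : nat).
exists N.+1, (fun e => \sum_(y <- L | y.2 == exps e) y.1); symmetry.
transitivity (\sum_e \sum_(y <- L) if y.2 == exps e then pmono y.1 y.2 else 0).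
  apply: eq_bigr => e _; rewrite poly2_monom skew_mono_sum big_mkcond.
  by apply: eq_bigr => y _; case: eqP => // ->.
rewrite exchange_big; apply: eq_big_seq => -[c [p q]] yL /=; rewrite -big_mkcond.
have pqN : (p + q <= N)%N := @leq_bigmax_seq _ L xpredT _ _ yL isT.
pose ey : {ffun 'I_2 -> 'I_N.+1} := [ffun i => inord (if val i == 0%N then p else q)].
rewrite (big_pred1 ey) // => e; rewrite /= ffun2_eq !ffunE /= xpair_eqE.
by rewrite -!val_eqE /= !inordK ?(eq_sym p) ?(eq_sym q) //; lia.
Qed.

Lemma skew_poly2_is_skew_poly_ring :
  is_skew_poly_ring (pair_fun s si) poly2_const poly2_var.
Proof.
split; [exact: poly2_const_hom | exact: poly2_var_comm | exact: poly2_var_const |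
        exact: poly2_indep | exact: poly2_span].
Qed.

End SkewLaurentAndPolynomialRings.

Lemma skew_laurent1_neq0 (D : nzRingType) (s si : D -> D) (hs : ring_hom s)
  (sK : cancel s si) (siK : cancel si s) : (1 : skew_laurent hs sK siK) != 0.
Proof.
apply/eqP => /(congr1 (fun u : skew_laurent hs sK siK => sval u (fun _ => 1) 0)).
by rewrite skew_op1 skew_op0; apply/eqP; rewrite oner_eq0.
Qed.

(** * Automorphic elements of the skew Laurent ring *)

Section LaurentCoefficients.
Variables (D : pzRingType) (s si : D -> D).
Hypotheses (hs : ring_hom s) (sK : cancel s si) (siK : cancel si s).
Local Notation S := (skew_laurent hs sK siK).
Local Notation lmono := (@skew_mono _ (laurent_action hs sK siK)).
Local Notation lconst := (laurent_const hs sK siK).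
Local Notation iterz := (iterz s si).

Definition laurent_coef (k : int) (u : S) : D := sval u (fun n => (n == k)%:R) 0.

Lemma laurent_coef_mulr u k b :
  laurent_coef k (u * lconst b) = laurent_coef k u * iterz k b.
Proof.
rewrite /laurent_coef skew_opM -skew_op_mulr_fun; congr (sval u _ _).
apply: funext => n; rewrite laurent_monoE addr0.
by case: eqP => [->|_]; rewrite ?mulr1 ?mul1r ?mulr0 ?mul0r.
Qed.

Lemma laurent_coef_mull u k d :
  laurent_coef k (lconst d * u) = d * laurent_coef k u.
Proof. by rewrite /laurent_coef skew_opM laurent_monoE addr0. Qed.

Lemma laurent_expand u k : exists U : seq int,
  [/\ uniq U, k \in U & u = \sum_(l <- U) lmono (laurent_coef l u) l].
Proof.
have [L uL] := skew_op_mono_sum u.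
set U := undup (k :: [seq y.2 | y <- L]).
have LU y : y \in L -> y.2 \in U by move=> yL; rewrite mem_undup inE map_f ?orbT.
exists U; split; rewrite ?undup_uniq ?mem_undup ?mem_head //.
have coefE l : laurent_coef l u = \sum_(y <- L | y.2 == l) y.1.
  rewrite uL /laurent_coef skew_op_sum [RHS]big_mkcond; apply: eq_bigr => y _.
  by rewrite laurent_monoE add0r; case: eqP; rewrite ?mulr1 ?mulr0.
under eq_bigr do rewrite coefE skew_mono_sum big_mkcond.
rewrite exchange_big {1}uL; apply: eq_big_seq => y yL.
rewrite (bigD1_seq y.2) ?LU ?undup_uniq // eqxx big1 ?Monoid.mulm1 // => l.
by rewrite eq_sym => /negbTE ->.
Qed.

Lemma laurent_homog_coef u k :
  (forall l, l != k -> laurent_coef l u = 0) -> u = lmono (laurent_coef k u) k.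
Proof.
move=> coef0; have [U [Uuniq kU uU]] := laurent_expand u k.
rewrite {1}uU (bigD1_seq k) //= big1_seq ?addr0 // => l /andP[lk _].
by rewrite coef0 ?skew_mono0.
Qed.

End LaurentCoefficients.

Section AutomorphicElements.
Variables (D : unitRingType) (s si : D -> D).
Hypotheses (hs : ring_hom s) (sK : cancel s si) (siK : cancel si s).
Hypothesis divD : division_ring D.
Local Notation S := (skew_laurent hs sK siK).
Local Notation lmono := (@skew_mono _ (laurent_action hs sK siK)).
Local Notation lconst := (laurent_const hs sK siK).
Local Notation iterz := (iterz s si).

Definition laurent_homog (k : int) (u : S) := exists2 c : D, c != 0 & u = lmono c k.

Lemma laurent_homog1 : laurent_homog 0 1.
Proof.
by exists 1; rewrite ?oner_neq0 // -(ring_hom1 (laurent_const_hom hs sK siK)).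
Qed.

Lemma laurent_homogM k u l v :
  laurent_homog k u -> laurent_homog l v -> laurent_homog (k + l) (u * v).
Proof.
move=> [c c0 ->] [d d0 ->]; exists (c * iterz k d); last exact: skew_monoM.
exact: division_ring_mulf_neq0 (iterz_neq0 hs sK siK k d0).
Qed.

Lemma laurent_homogX k u n : laurent_homog k u -> laurent_homog (n%:Z * k) (u ^+ n).
Proof.
move=> uk; elim: n => [|n IH]; first by rewrite mul0r expr0; exact: laurent_homog1.
by rewrite exprS (_ : n.+1%:Z * k = k + n%:Z * k); [exact: laurent_homogM | lia].
Qed.

Lemma laurent_homog_monom m n (a : 'I_m -> S) (k : 'I_m -> int) (e : {ffun 'I_m -> 'I_n}) :
  (forall i, laurent_homog (k i) (a i)) ->
  laurent_homog (\sum_(i < m) (e i : nat)%:Z * k i) (monom a e).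
Proof.
move=> ak; apply: (big_ind2 laurent_homog laurent_homog1 laurent_homogM) => i _.
exact: laurent_homogX.
Qed.

Lemma finite_inner_order_conj_iterz (tau : D -> D) k l c d :
  c != 0 -> d != 0 -> k != l ->
  (forall b, c * iterz k b = tau b * c) -> (forall b, d * iterz l b = tau b * d) ->
  finite_inner_order s.
Proof.
wlog lk : k l c d / l < k => [wlog c0 d0 kl ck dl|c0 d0 _ ck dl].
  case: (ltgtP l k) => [lk|kl'|lk]; last by rewrite lk eqxx in kl.
  - exact: (wlog k l c d).
  - by apply: (wlog l k d c); rewrite // eq_sym.
have [cU dU] := (divD c0, divD d0).
exists `|k - l|%N; split; first lia.
exists (c^-1 * d); split=> [|r]; first by rewrite unitrMl ?unitrV.
set x := iterz (- l) r.
have xr : iterz l x = r by rewrite /x -iterzD // subrr.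
have tauE : tau x = d * r * d^-1 by rewrite -xr dl mulrK.
have -> : iter `|k - l| s r = iterz k x.
  rewrite /x -iterzD // -[iter _ s r]/(iterz `|k - l|%N r); congr (iterz _ r); lia.
apply: (mulrI cU); rewrite ck tauE invrM ?unitrV // invrK !mulrA mulrV //.
by rewrite mul1r.
Qed.

Lemma laurent_automorphic_homog (tau : D -> D) a :
  ~ finite_inner_order s -> a != 0 ->
  (forall b, a * lconst b = lconst (tau b) * a) -> exists k, laurent_homog k a.
Proof.
move=> infinite a0 a_aut.
have coef_twist k b : laurent_coef k a * iterz k b = tau b * laurent_coef k a.
  by rewrite -laurent_coef_mulr a_aut laurent_coef_mull.
have [k ak0] : exists k, laurent_coef k a != 0.
  apply: contrapT => /forallNP coef0; move/eqP: a0; apply.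
  have {}coef0 l : laurent_coef l a = 0 by apply/eqP/negPn/negP; exact: coef0.
  by rewrite (laurent_homog_coef (k := 0) (fun l _ => coef0 l)) coef0 skew_mono0.
exists k, (laurent_coef k a) => //; apply: laurent_homog_coef => l lk.
apply/eqP; apply: contraT => al0; exfalso; apply: infinite.
exact: finite_inner_order_conj_iterz al0 ak0 lk (coef_twist l) (coef_twist k).
Qed.

End AutomorphicElements.

(** * Algebraic independence *)

Section AlgebraicDependence.
Variables (D : nzRingType) (S : pzRingType) (j : D -> S) (m : nat) (a : 'I_m -> S).

Lemma left_alg_indep_neq0 : j 0 = 0 -> left_alg_indep j a -> forall i, a i != 0.
Proof.
move=> j0 indep i; apply/eqP => ai0.
pose e : {ffun 'I_m -> 'I_2} := [ffun i' => if i' == i then ord_max else ord0].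
pose C x := if x == e then 1 else 0 : D.
suff /indep/(_ e) : \sum_x j (C x) * monom a x = 0 by rewrite /C eqxx => /eqP; rewrite oner_eq0.
apply: big1 => x _; rewrite /C; case: eqP => [->|_]; last by rewrite j0 mul0r.
by rewrite /monom (prodr_mem_eq0 (mem_index_enum i)) ?ffunE ?eqxx ?ai0 ?expr1 ?mulr0.
Qed.

Lemma left_alg_indepN_monom n (e e' : {ffun 'I_m -> 'I_n}) c :
  ring_hom j -> e != e' -> monom a e = j c * monom a e' -> ~ left_alg_indep j a.
Proof.
move=> hj ee' eE indep.
pose C x := if x == e then 1 else if x == e' then - c else 0.
suff /indep/(_ e) : \sum_x j (C x) * monom a x = 0 by rewrite /C eqxx => /eqP; rewrite oner_eq0.
have e'e : e' != e by rewrite eq_sym.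
rewrite (bigD1 e) // (bigD1 e') //= big1 => [|x /andP[xe xe']].
  rewrite /C eqxx (negbTE e'e) eqxx (ring_homN hj) (ring_hom1 hj) eE.
  by rewrite mulNr mul1r addr0 subrr.
by rewrite /C (negbTE xe) (negbTE xe') (ring_hom0 hj) mul0r.
Qed.

End AlgebraicDependence.

Lemma exists_equal_degree_pairs (k l : int) : exists p q p' q' : nat,
  [/\ (p, q) != (p', q'), (maxn (maxn p q) (maxn p' q') <= (`|k| + `|l|).+1)%N
    & p%:Z * k + q%:Z * l = p'%:Z * k + q'%:Z * l].
Proof.
have [->|l0] := eqVneq l 0; first by exists 0%N, 1%N, 0%N, 0%N; split=> //; lia.
have l0' : (absz l != 0)%N by rewrite absz_eq0.
have [kl|kl] := ltrP 0 (k * l).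
- by exists (absz l), 0%N, 0%N, (absz k); split; rewrite ?xpair_eqE ?(negbTE l0') //; nia.
- by exists (absz l), (absz k), 0%N, 0%N; split; rewrite ?xpair_eqE ?(negbTE l0') //; nia.
Qed.

Section LaurentIndependence.
Variables (D : unitRingType) (s si : D -> D).
Hypotheses (hs : ring_hom s) (sK : cancel s si) (siK : cancel si s).
Hypothesis divD : division_ring D.
Local Notation S := (skew_laurent hs sK siK).
Local Notation lconst := (laurent_const hs sK siK).

Lemma laurent_homog_proportional k u v :
  laurent_homog k u -> laurent_homog k v -> exists c, u = lconst c * v.
Proof.
move=> [c _ ->] [d d0 ->]; exists (c * d^-1).
by rewrite laurent_monoM add0r mulrVK //; exact: divD.
Qed.

Lemma laurent_alg_dep_degree m (a : 'I_m -> S) (k : 'I_m -> int) n (e e' : {ffun 'I_m -> 'I_n}) :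
  (forall i, laurent_homog (k i) (a i)) -> e != e' ->
  \sum_(i < m) (e i : nat)%:Z * k i = \sum_(i < m) (e' i : nat)%:Z * k i ->
  ~ left_alg_indep lconst a.
Proof.
move=> ak ee' deg; have := laurent_homog_monom divD e ak; rewrite deg => homE.
have [c eE] := laurent_homog_proportional homE (laurent_homog_monom divD e' ak).
exact: left_alg_indepN_monom (laurent_const_hom hs sK siK) ee' eE.
Qed.

Lemma laurent_alg_indep_size_le1 m (a : 'I_m -> S) (k : 'I_m -> int) :
  (forall i, laurent_homog (k i) (a i)) -> left_alg_indep lconst a -> (m <= 1)%N.
Proof.
move=> ak indep; rewrite leqNgt; apply/negP => m2.
pose i0 : 'I_m := Ordinal (ltnW m2); pose i1 : 'I_m := Ordinal m2.
have i10 : i1 != i0 by rewrite -val_eqE /=; lia.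
have [p [q [p' [q' [pq pq_le deg]]]]] := exists_equal_degree_pairs (k i0) (k i1).
set b := (`|k i0| + `|k i1|).+1 in pq_le.
have [pqb p'q'b] : (maxn p q <= b)%N /\ (maxn p' q' <= b)%N by lia.
pose exps x y : {ffun 'I_m -> 'I_b.+1} :=
  [ffun i => inord (if i == i0 then x else if i == i1 then y else 0%N)].
have expsE x y i : (maxn x y <= b)%N ->
    exps x y i = (if i == i0 then x else if i == i1 then y else 0%N) :> nat.
  by move=> xy; rewrite ffunE inordK //; case: ifP => _; [|case: ifP]; lia.
have degE x y : (maxn x y <= b)%N ->
    \sum_(i < m) (exps x y i : nat)%:Z * k i = x%:Z * k i0 + y%:Z * k i1.
  move=> xy; rewrite (bigD1 i0) // (bigD1 i1) //= big1 => [|i /andP[ii1 ii0]].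
    by rewrite !expsE // eqxx (negbTE i10) eqxx addr0.
  by rewrite expsE // (negbTE ii0) (negbTE ii1) mul0r.
apply: (laurent_alg_dep_degree (e := exps p q) (e' := exps p' q') ak _ _ indep).
  apply: contra pq => /eqP/ffunP eq_exps.
  have := congr1 val (eq_exps i0); have := congr1 val (eq_exps i1).
  by rewrite /= !expsE // eqxx (negbTE i10) eqxx => -> ->.
by rewrite !degE.
Qed.

End LaurentIndependence.

(** * Finite generation over a one-sided subring *)

Section OneSidedSubring.
Variables (D : nzRingType) (s si : D -> D).
Hypotheses (hs : ring_hom s) (sK : cancel s si) (siK : cancel si s).
Local Notation S := (skew_laurent hs sK siK).
Local Notation lmono := (@skew_mono _ (laurent_action hs sK siK)).
Variable sg : int.

Definition vanish_from (b : int) (g : int -> D) := forall n, b <= sg * n -> g n = 0.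

Definition shift_bounded (N : nat) (u : S) :=
  forall b g, vanish_from b g -> vanish_from (b + N%:Z) (sval u g).

Lemma shift_bounded_le N M u : (N <= M)%N -> shift_bounded N u -> shift_bounded M u.
Proof. by move=> NM uN b g gb n bn; apply: (uN b g gb); lia. Qed.

Lemma shift_bounded0 N : shift_bounded N 0.
Proof. by []. Qed.

Lemma shift_bounded1 : shift_bounded 0 1.
Proof. by move=> b g gb n bn; rewrite skew_op1 gb //; lia. Qed.

Lemma shift_boundedD N u v : shift_bounded N u -> shift_bounded N v -> shift_bounded N (u + v).
Proof. by move=> uN vN b g gb n bn; rewrite skew_opD (uN b g) ?(vN b g) ?addr0. Qed.

Lemma shift_boundedB N u v : shift_bounded N u -> shift_bounded N v -> shift_bounded N (u - v).
Proof. by move=> uN vN b g gb n bn; rewrite skew_opB (uN b g) ?(vN b g) ?subr0. Qed.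

Lemma shift_boundedM M N u v :
  shift_bounded M u -> shift_bounded N v -> shift_bounded (N + M) (u * v).
Proof.
move=> uM vN b g gb n bn; rewrite skew_opM (uM (b + N%:Z)) //; first exact: vN.
by move: bn; rewrite PoszD addrA.
Qed.

Lemma shift_bounded_mono c (k : int) : 0 <= sg * k -> shift_bounded 0 (lmono c k).
Proof. by move=> k0 b g gb n bn; rewrite laurent_monoE gb ?mulr0 //; rewrite mulrDr; lia. Qed.

Lemma gen_subring_shift_bounded (G : S -> Prop) :
  (forall g, G g -> shift_bounded 0 g) -> forall u, gen_subring G u -> shift_bounded 0 u.
Proof.
move=> G0 u; apply=> //; first exact: shift_bounded1.
- by move=> v w; exact: shift_boundedB.
- by move=> v w; exact: shift_boundedM.
Qed.

Hypothesis sg_unit : sg = 1 \/ sg = -1.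

Lemma shift_bounded_mono_abs c (k : int) : shift_bounded `|k| (lmono c k).
Proof.
move=> b g gb n bn; rewrite laurent_monoE gb ?mulr0 // mulrDr.
by case: sg_unit bn => ->; rewrite ?mul1r ?mulN1r; lia.
Qed.

Lemma shift_bounded_exists u : exists N, shift_bounded N u.
Proof.
have [L ->] := skew_op_mono_sum u; exists (\sum_(y <- L) `|y.2|)%N.
elim: L => [|y L IH]; first by rewrite !big_nil; exact: shift_bounded0.
rewrite !big_cons; apply: shift_boundedD.
- by apply: (shift_bounded_le (leq_addr _ _)); exact: shift_bounded_mono_abs.
- by apply: (shift_bounded_le (leq_addl _ _)); exact: IH.
Qed.

Lemma not_shift_bounded N : ~ shift_bounded N (lmono 1 (- (sg * N.+1%:Z))).
Proof.
pose g n := (n == - sg)%:R : D.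
have gb : vanish_from 0 g.
  move=> n n0; rewrite /g; case: eqP => // nsg; exfalso.
  by move: n0; rewrite nsg; case: sg_unit => ->; lia.
move=> /(_ 0 g gb (sg * N%:Z)) bounded.
have /eqP : sval (lmono 1 (- (sg * N.+1%:Z))) g (sg * N%:Z) = 0.
  by apply: bounded; case: sg_unit => ->; lia.
rewrite laurent_monoE (ring_hom1 (iterz_hom hs sK siK _)) mul1r /g.
by rewrite (_ : _ + _ = - sg) ?eqxx ?oner_eq0 //; case: sg_unit => ->; lia.
Qed.

Lemma not_left_fin_gen_shift_bounded (B : S -> Prop) :
  (forall u, B u -> shift_bounded 0 u) -> ~ left_fin_gen B.
Proof.
move=> B0 [k [g gen]].
have [N gN] := choice (fun l => shift_bounded_exists (g l)).
pose Nmax := (\max_(l < k) N l)%N.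
have [b [Bb bE]] := gen (lmono 1 (- (sg * Nmax.+1%:Z))).
apply: (@not_shift_bounded Nmax); rewrite bE.
apply: big_ind => [|u v|l _]; [exact: shift_bounded0 | exact: shift_boundedD |].
apply: shift_bounded_le (shift_boundedM (B0 _ (Bb l)) (gN l)).
by rewrite addn0; exact: leq_bigmax.
Qed.

End OneSidedSubring.

Lemma one_sided_sign m (k : 'I_m -> int) : (m <= 1)%N ->
  exists2 sg : int, sg = 1 \/ sg = -1 & forall i, 0 <= sg * k i.
Proof.
case: m k => [|[|//]] k _; first by exists 1 => [|[]]; first left.
exists (if 0 <= k 0 then 1 else -1) => [|i]; first by case: ifP; [left|right].
by rewrite (ord1 i); case: (leP 0 (k 0)) => k0; lia.
Qed.

Theorem proposition5p7 (D : unitRingType) (sigma sigmai : D -> D) :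
  division_ring D ->
  ring_aut sigma -> cancel sigma sigmai -> cancel sigmai sigma ->
  ~ finite_inner_order sigma ->
  ~ aut_normalizable_tuple (pair_fun sigma sigmai).
Proof.
move=> divD [hs _] sK siK infinite normalizable.
have := normalizable _ _ _ (skew_poly2_is_skew_poly_ring hs sK siK) _ _
  (laurent_of_poly2_hom hs sK siK) (@laurent_of_poly2_surj _ _ _ hs sK siK)
  (skew_laurent1_neq0 hs sK siK).
have -> : (fun d => laurent_of_poly2 (poly2_const hs sK siK d)) = laurent_const hs sK siK.
  by apply: funext => d; exact: laurent_of_poly2_const.
case=> m [a [tau [_ [_ [_ [a_aut [indep fin]]]]]]].
have a0 := left_alg_indep_neq0 (ring_hom0 (laurent_const_hom hs sK siK)) indep.
have [k ak] := choice (fun i => laurent_automorphic_homog divD infinite (a0 i) (a_aut i)).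
have [sg sg_unit ksg] := one_sided_sign k (laurent_alg_indep_size_le1 divD ak indep).
apply: (not_left_fin_gen_shift_bounded sg_unit) fin.
apply: gen_subring_shift_bounded => _ [[d ->]|[i ->]].
  by apply: shift_bounded_mono; rewrite mulr0.
by have [c _ ->] := ak i; exact: shift_bounded_mono.
Qed.
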